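(* Let $\theta$ be a homogeneous polynomial of degree $m\ge 1$ on $\mathbb C^N$ with coefficients in $[\mathcal U,\mathcal Y]$, not identically zero. Then there exist separable Hilbert spaces $\mathcal Y^{(0)}=\mathcal Y,\mathcal Y^{(1)},\dots,\mathcal Y^{(m)}=\mathcal U$ and operators $L^{(j)}_k\in[\mathcal Y^{(j)},\mathcal Y^{(j-1)}]$ ($j=1,\dots,m$, $k=1,\dots,N$) such that $\theta(z)=z\mathbf L^{(1)}\cdots z\mathbf L^{(m)}$ for all $z\in\mathbb C^N$. Moreover, if $m>1$ and $\alpha=(N;\mathbf A,\mathbf B,\mathbf C,\mathbf D;\mathcal X,\mathcal U,\mathcal Y)$ is any $N$-parametric system whose transfer function coincides with $\theta$ on a neighbourhood of $0$, then $\theta(z)=z\mathbf C\,(z\mathbf A)^{m-2}\,z\mathbf B$ for all $z\in\mathbb C^N$.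
   Context: For an $N$-tuple $\mathbf T=(T_1,\dots,T_N)$ of operators and $z\in\mathbb C^N$, $z\mathbf T:=\sum_k z_kT_k$. An $N$-parametric system $\alpha=(N;\mathbf A,\mathbf B,\mathbf C,\mathbf D;\mathcal X,\mathcal U,\mathcal Y)$ consists of separable Hilbert spaces $\mathcal X$ (state space), $\mathcal U$ (input space), $\mathcal Y$ (output space) and $N$-tuples of bounded operators $A_k\in[\mathcal X,\mathcal X]$, $B_k\in[\mathcal U,\mathcal X]$, $C_k\in[\mathcal X,\mathcal Y]$, $D_k\in[\mathcal U,\mathcal Y]$, $k=1,\dots,N$. Its transfer function is $\theta_\alpha(z)=z\mathbf D+z\mathbf C(I_{\mathcal X}-z\mathbf A)^{-1}z\mathbf B$, holomorphic on a neighbourhood of $z=0$. *)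

From HB Require Import structures.
From mathcomp Require Import all_boot all_order all_algebra.
From mathcomp Require Import all_classical all_reals all_analysis.
From mathcomp Require Import complex.
Set Implicit Arguments. Unset Strict Implicit. Unset Printing Implicit Defensive.
Import Order.TTheory GRing.Theory Num.Theory.
Import numFieldNormedType.Exports.
Local Open Scope classical_set_scope.
Local Open Scope ring_scope.

Definition CC (R : realType) : numFieldType := R[i].

Record hilbert (R : realType) := Hilbert {
  hcarrier :> normedModType (CC R);
  hinner : hcarrier -> hcarrier -> CC R;
  hinner_linl : forall (a : CC R) (x y z : hcarrier),
      hinner (a *: x + y) z = a * hinner x z + hinner y z;
  hinner_sym : forall x y : hcarrier, hinner y x = Num.conj (hinner x y);
  hnorm_inner : forall x : hcarrier, `|x| ^+ 2 = hinner x x;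
  hcomplete : forall F : set_system hcarrier, ProperFilter F -> cauchy F -> cvg F;
  hseparable : exists f : nat -> hcarrier, dense (range f)
}.

(* Bounded (= continuous) linear operators in [X, Y]. *)
Definition is_bop (R : realType) (X Y : hilbert R) (T : X -> Y) : Prop :=
  (forall (a : CC R) (x y : X), T (a *: x + y) = a *: T x + T y) /\ continuous T.

Definition zop (R : realType) (N : nat) (X Y : hilbert R)
  (z : 'rV[CC R]_N) (T : 'I_N -> X -> Y) : X -> Y :=
  fun x => \sum_(k < N) z ord0 k *: T k x.

Definition hpoly (R : realType) (N m : nat) (U Y : hilbert R)
  (c : {ffun 'I_N -> 'I_m.+1} -> U -> Y) (z : 'rV[CC R]_N) : U -> Y :=
  fun u => \sum_(a : {ffun 'I_N -> 'I_m.+1} | (\sum_(k < N) (a k : nat))%N == m)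
             (\prod_(k < N) z ord0 k ^+ a k) *: c a u.

(* F z = z L^(1) z L^(2) ... z L^(n) with L^(j)_k in [Y^(j), Y^(j-1)],
   Y^(0) = X, Y^(n) = U, intermediate spaces separable Hilbert spaces. *)
Inductive factorization (R : realType) (N : nat) (U : hilbert R) :
  forall (X : hilbert R), nat -> ('rV[CC R]_N -> U -> X) -> Prop :=
| fact1 (X : hilbert R) (L : 'I_N -> U -> X) :
    (forall k, is_bop (L k)) -> @factorization R N U X 1 (fun z => zop z L)
| factS (X W : hilbert R) (n : nat) (L : 'I_N -> W -> X) (F : 'rV[CC R]_N -> U -> W) :
    (forall k, is_bop (L k)) -> @factorization R N U W n F ->
    @factorization R N U X n.+1 (fun z u => zop z L (F z u)).

(* The transfer function of the N-parametric system (A,B,C,D) coincides with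
   theta on a neighbourhood of 0:
   theta(z) = zD + zC (I - zA)^{-1} zB, i.e. for every u and the solution x of
   (I - zA) x = zB u one has theta(z) u = zD u + zC x (and I - zA is bijective). *)
Definition transfer_eq_near0 (R : realType) (N : nat) (X U Y : hilbert R)
  (A : 'I_N -> X -> X) (B : 'I_N -> U -> X) (C : 'I_N -> X -> Y) (D : 'I_N -> U -> Y)
  (theta : 'rV[CC R]_N -> U -> Y) : Prop :=
  \forall z \near (0 : 'rV[CC R]_N),
     bijective (fun x : X => x - zop z A x) /\
     forall (u : U) (x : X), x - zop z A x = zop z B u ->
       theta z u = zop z D u + zop z C x.

From Pilot Require Import Defs.
From HB Require Import structures.
From mathcomp Require Import all_boot all_order all_algebra.
From mathcomp Require Import all_classical all_reals all_analysis.
From mathcomp Require Import complex.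
From mathcomp Require Import ring lra.
Import Order.TTheory GRing.Theory Num.Theory.
Import numFieldNormedType.Exports.
Set Implicit Arguments. Unset Strict Implicit. Unset Printing Implicit Defensive.
Local Open Scope classical_set_scope.
Local Open Scope ring_scope.

(* Factorization: expand theta as a sum of monomials z_(k_1) ... z_(k_m) c_a u.
   The first factor is the "row" map Y^N -> Y, y |-> sum_k z_k y_k; the
   coefficient of a monomial is placed in the slot k_1 of Y^N, and the remaining
   word k_2 ... k_m is factored recursively with Y^N in place of Y.

   Realization: replacing z by r z with r > 0 small and solving the state
   equation by a finite Neumann expansion, the transfer identity becomes
   r^m theta(z) u = r zD u + sum_(n < m - 1) r^(n+2) zC (zA)^n zB u + O(r^(m+1)).
   A vector polynomial in r which is O(r^(m+1)) at 0 has vanishing coefficients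
   up to degree m; the coefficient of r^m gives theta(z) = zC (zA)^(m-2) zB. *)

Section SumsOfSquares.
Variables (R : realFieldType) (I : finType).
Implicit Types b c : I -> R.

Lemma sum_sqr_le_sqr_sum (s : seq I) b : (forall i, 0 <= b i) ->
  \sum_(i <- s) b i ^+ 2 <= (\sum_(i <- s) b i) ^+ 2.
Proof.
move=> b0; elim: s => [|a s IH]; first by rewrite !big_nil expr0n.
rewrite !big_cons.
have S0 : 0 <= \sum_(i <- s) b i by apply: sumr_ge0.
have := b0 a; nra.
Qed.

Lemma cauchy_schwarz_sum b c :
  (\sum_i b i * c i) ^+ 2 <= (\sum_i b i ^+ 2) * (\sum_i c i ^+ 2).
Proof.
set B := \sum_i b i ^+ 2; set C := \sum_i c i ^+ 2; set D := \sum_i b i * c i.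
have B0 : 0 <= B by apply: sumr_ge0 => i _; exact: sqr_ge0.
(* B (B C - D^2) is the sum of squares sum_i (B c_i - D b_i)^2 *)
have key : 0 <= B * (B * C - D ^+ 2).
  have -> : B * (B * C - D ^+ 2) = \sum_i (B * c i - D * b i) ^+ 2.
    transitivity (\sum_i (B ^+ 2 * c i ^+ 2 - (2 * B * D) * (b i * c i)
                          + D ^+ 2 * b i ^+ 2)).
      by rewrite big_split /= sumrB -!mulr_sumr -/B -/C -/D; ring.
    by apply: eq_bigr => i _; ring.
  by apply: sumr_ge0 => i _; exact: sqr_ge0.
have [B00|Bn0] := eqVneq B 0.
  have b0 i : b i = 0.
    apply/eqP; rewrite -sqrf_eq0; apply/eqP.
    move/eqP: B00; rewrite psumr_eq0 => [/allP B0i|j _]; last exact: sqr_ge0.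
    by apply/eqP; apply: B0i; rewrite mem_index_enum.
  rewrite /D big1 ?expr0n ?B00 ?mul0r // => i _.
  by rewrite b0 mul0r.
have B_gt0 : 0 < B by rewrite lt_def Bn0 B0.
by rewrite -subr_ge0; move: key; rewrite pmulr_rge0.
Qed.

End SumsOfSquares.

Lemma minkowski_sum (R : rcfType) (I : finType) (a b c : I -> R) :
  (forall i, 0 <= a i) -> (forall i, 0 <= b i) -> (forall i, 0 <= c i) ->
  (forall i, a i <= b i + c i) ->
  Num.sqrt (\sum_i a i ^+ 2) <=
    Num.sqrt (\sum_i b i ^+ 2) + Num.sqrt (\sum_i c i ^+ 2).
Proof.
move=> a0 b0 c0 abc.
apply: (@le_trans _ _ (Num.sqrt (\sum_i (b i + c i) ^+ 2))).
  rewrite ler_sqrt; last by apply: sumr_ge0 => i _; exact: sqr_ge0.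
  apply: ler_sum => i _; have := abc i; have := a0 i; nra.
set B := \sum_i b i ^+ 2; set C := \sum_i c i ^+ 2; set D := \sum_i b i * c i.
have B0 : 0 <= B by apply: sumr_ge0 => i _; exact: sqr_ge0.
have C0 : 0 <= C by apply: sumr_ge0 => i _; exact: sqr_ge0.
have D0 : 0 <= D by apply: sumr_ge0 => i _; apply: mulr_ge0.
have BCD : D <= Num.sqrt B * Num.sqrt C.
  rewrite -sqrtrM // -(ger0_norm D0) -sqrtr_sqr ler_sqrt ?mulr_ge0 //.
  exact: cauchy_schwarz_sum.
have -> : \sum_i (b i + c i) ^+ 2 = B + 2 * D + C.
  rewrite /B /C /D mulr_sumr -!big_split /=; apply: eq_bigr => i _; ring.
have sB := sqrtr_ge0 B; have sC := sqrtr_ge0 C.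
rewrite -(ger0_norm (addr_ge0 sB sC)) -sqrtr_sqr ler_sqrt ?sqr_ge0 //.
have := sqr_sqrtr B0; have := sqr_sqrtr C0; nra.
Qed.

Section RealNorm.
Variable R : realType.

Lemma Re_gt0 (e : CC R) : 0 < e -> 0 < complex.Re e.
Proof. by move=> e0; rewrite -ltcR RRe_real // gtr0_real. Qed.

Lemma Re_normc_real (r : R) : complex.Re `|(r%:C)%C : CC R| = `|r|.
Proof. by rewrite normc_def /= expr0n /= addr0 sqrtr_sqr. Qed.

Variable V : normedModType (CC R).
Implicit Types v w : V.

(* The norm of V is real but lives in CC R; rnorm is its real part. *)
Definition rnorm v : R := complex.Re `|v|.

Lemma normr_rnorm v : `|v| = (rnorm v)%:C%C.
Proof. by rewrite /rnorm RRe_real. Qed.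

Lemma rnorm_ge0 v : 0 <= rnorm v.
Proof. by rewrite -lecR -normr_rnorm normr_ge0. Qed.

Lemma rnormD v w : rnorm (v + w) <= rnorm v + rnorm w.
Proof. by have := ler_normD v w; rewrite !normr_rnorm -rmorphD lecR. Qed.

Lemma rnormN v : rnorm (- v) = rnorm v.
Proof. by rewrite /rnorm normrN. Qed.

Lemma rnorm0 : rnorm 0 = 0.
Proof. by rewrite /rnorm normr0. Qed.

Lemma rnorm_eq0 v : rnorm v = 0 -> v = 0.
Proof. by move=> h; apply/eqP; rewrite -normr_eq0 normr_rnorm h. Qed.

Lemma rnormZ (a : CC R) v : rnorm (a *: v) = complex.Re `|a| * rnorm v.
Proof.
rewrite /rnorm normrZ.
have -> : `|a| = (complex.Re `|a|)%:C%C by rewrite RRe_real.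
by rewrite [`|v|]normr_rnorm -rmorphM.
Qed.

Lemma rnormZr (r : R) v : 0 <= r -> rnorm ((r%:C)%C *: v) = r * rnorm v.
Proof. by move=> r0; rewrite rnormZ Re_normc_real ger0_norm. Qed.

Lemma rnorm_sum (I : Type) (s : seq I) (P : pred I) (F : I -> V) :
  rnorm (\sum_(i <- s | P i) F i) <= \sum_(i <- s | P i) rnorm (F i).
Proof.
have : `|\sum_(i <- s | P i) F i| <= \sum_(i <- s | P i) `|F i|.
  exact: ler_norm_sum.
rewrite (eq_bigr (fun i => (rnorm (F i))%:C%C)); last by move=> i _; rewrite normr_rnorm.
by rewrite normr_rnorm -rmorph_sum lecR.
Qed.

Lemma dense_range_approx (f : nat -> V) : dense (range f) ->
  forall v (e : CC R), 0 < e -> exists j, `|v - f j| < e.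
Proof.
move=> df v e e0.
have [w [vw [j _ fjw]]] := df (ball v e) (ex_intro _ v (ballxx v e0)) (ball_open v e).
by exists j; rewrite fjw; move: vw; rewrite -ball_normE.
Qed.

Lemma normr_lt_rnorm v (e : CC R) : 0 < e -> (`|v| < e) = (rnorm v < complex.Re e).
Proof.
move=> e0; have -> : e = (complex.Re e)%:C%C by rewrite RRe_real // gtr0_real.
by rewrite normr_rnorm ltcR.
Qed.

End RealNorm.

Section HilbertPower.
Variables (R : realType) (H : hilbert R) (n : nat).

(* H^n carries the l^2 norm of the coordinate norms, as the Hilbert structure requires *)
Definition hpow := {ffun 'I_n -> H}.
HB.instance Definition _ := GRing.Lmodule.on hpow.

Definition hpow_sqsum (x : hpow) : R := \sum_i rnorm (x i) ^+ 2.
Definition hpow_norm (x : hpow) : CC R := (Num.sqrt (hpow_sqsum x))%:C%C.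

Lemma hpow_sqsum_ge0 x : 0 <= hpow_sqsum x.
Proof. by apply: sumr_ge0 => i _; exact: sqr_ge0. Qed.

Lemma hpow_normD x y : hpow_norm (x + y) <= hpow_norm x + hpow_norm y.
Proof.
rewrite /hpow_norm -rmorphD lecR; apply: minkowski_sum => i; rewrite ?rnorm_ge0 //.
by rewrite ffunE rnormD.
Qed.

Lemma hpow_normZ (l : CC R) x : hpow_norm (l *: x) = `|l| * hpow_norm x.
Proof.
rewrite /hpow_norm /hpow_sqsum.
have -> : `|l| = (complex.Re `|l|)%:C%C by rewrite RRe_real.
rewrite -(@rmorphM _ _ (real_complex R)); congr (_%:C%C).
have l0 : 0 <= complex.Re `|l| by rewrite -ler0c RRe_real.
under eq_bigr => i _ do rewrite ffunE rnormZ exprMn.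
by rewrite -mulr_sumr sqrtrM ?sqr_ge0 // sqrtr_sqr ger0_norm.
Qed.

Lemma hpow_norm_eq0 x : hpow_norm x = 0 -> x = 0.
Proof.
rewrite /hpow_norm => /(congr1 (@complex.Re R)) /= /eqP.
rewrite sqrtr_eq0 => S0.
have /eqP : hpow_sqsum x = 0 by apply/eqP; rewrite eq_le S0 hpow_sqsum_ge0.
rewrite /hpow_sqsum psumr_eq0 => [/allP w0|j _]; last exact: sqr_ge0.
apply/ffunP => i; rewrite ffunE; apply: rnorm_eq0; apply/eqP.
by rewrite -sqrf_eq0; apply: w0; rewrite mem_index_enum.
Qed.

HB.instance Definition _ := Lmodule_isNormed.Build (CC R) hpow
  hpow_normD hpow_normZ hpow_norm_eq0.

End HilbertPower.

Section HilbertPowerSpace.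
Variables (R : realType) (H : hilbert R) (n : nat).
Local Notation P := (hpow H n).
Implicit Types x y : P.

Lemma rnorm_hpow x : rnorm x = Num.sqrt (hpow_sqsum x).
Proof. by []. Qed.

Lemma rnorm_coord_le x k : rnorm (x k) <= rnorm x.
Proof.
rewrite rnorm_hpow -(ger0_norm (rnorm_ge0 (x k))) -sqrtr_sqr.
rewrite ler_sqrt ?hpow_sqsum_ge0 // /hpow_sqsum (bigD1 k) //= lerDl.
by apply: sumr_ge0 => i _; exact: sqr_ge0.
Qed.

Lemma rnorm_hpow_le_sum x : rnorm x <= \sum_k rnorm (x k).
Proof.
have S0 : 0 <= \sum_k rnorm (x k) by apply: sumr_ge0 => i _; exact: rnorm_ge0.
rewrite rnorm_hpow -(ger0_norm S0) -sqrtr_sqr ler_sqrt ?sqr_ge0 //.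
by apply: sum_sqr_le_sqr_sum => i; exact: rnorm_ge0.
Qed.

Lemma rnorm_hpow_lt x (e : R) : 0 < e ->
  (forall k, rnorm (x k) < e / n.+1%:R) -> rnorm x < e.
Proof.
move=> e0 xe; apply: le_lt_trans (rnorm_hpow_le_sum x) _.
apply: (@le_lt_trans _ _ (\sum_(k < n) (e / n.+1%:R))).
  by apply: ler_sum => k _; apply: ltW.
rewrite sumr_const card_ord -[_ *+ n]mulr_natr mulrAC ltr_pdivrMr ?ltr0n //.
by rewrite ltr_pM2l // ltr_nat.
Qed.

Definition hpow_inner x y : CC R := \sum_i hinner (x i) (y i).

Lemma hpow_innerlD (a : CC R) x y z :
  hpow_inner (a *: x + y) z = a * hpow_inner x z + hpow_inner y z.
Proof.
rewrite /hpow_inner mulr_sumr -big_split /=; apply: eq_bigr => i _.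
by rewrite !ffunE hinner_linl.
Qed.

Lemma hpow_innerC x y : hpow_inner y x = Num.conj (hpow_inner x y).
Proof. by rewrite /hpow_inner rmorph_sum; apply: eq_bigr => i _; exact: hinner_sym. Qed.

Lemma hpow_norm_inner x : `|x| ^+ 2 = hpow_inner x x.
Proof.
have -> : `|x| = hpow_norm x by [].
rewrite /hpow_norm -rmorphXn sqr_sqrtr ?hpow_sqsum_ge0 //.
rewrite /hpow_sqsum rmorph_sum; apply: eq_bigr => i _.
by rewrite -hnorm_inner (normr_rnorm (x i)) -rmorphXn.
Qed.

Lemma hpow_complete (F : set_system P) : ProperFilter F -> cauchy F -> cvg F.
Proof.
move=> PF cF.
have cvg_coord : forall k, cvg ((fun x : P => x k) @ F).
  move=> k; apply: hcomplete; apply/cauchy_exP => e e0.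
  have [w0 Fw0] := (proj1 (cauchyP F) cF) e e0.
  exists (w0 k); rewrite /nbhs /=; apply: filterS Fw0 => y; rewrite -!ball_normE /= => w0y.
  rewrite normr_lt_rnorm // in w0y; rewrite normr_lt_rnorm //.
  apply: le_lt_trans w0y.
  have -> : w0 k - y k = (w0 - y) k by rewrite !ffunE.
  exact: rnorm_coord_le.
pose l : P := [ffun k => lim ((fun x : P => x k) @ F)].
apply: (@cvgP _ _ l); apply/fcvgrPdist_lt => e e0.
have e'0 : (0 : CC R) < ((complex.Re e / n.+1%:R)%:C)%C.
  by rewrite ltcR divr_gt0 ?ltr0n ?Re_gt0.
have near_coord k : \forall y \near F, rnorm (l k - (y : P) k) < complex.Re e / n.+1%:R.
  move/cvgrPdist_lt: (cvg_coord k) => /(_ _ e'0); apply: filterS => y.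
  by rewrite normr_lt_rnorm // ffunE.
have := @filter_forall P _ _ F PF near_coord.
apply: filterS => y near_y; rewrite normr_lt_rnorm //.
apply: rnorm_hpow_lt => [|k]; first exact: Re_gt0.
by have -> : (l - y) k = l k - y k by rewrite !ffunE.
Qed.

Lemma hpow_separable : exists g : nat -> P, dense (range g).
Proof.
have [f df] := hseparable H.
(* enumerate the n-tuples of indices of the dense sequence f through CodeSeq *)
pose g j : P := [ffun k : 'I_n => f (nth 0%N (CodeSeq.decode j) k)].
exists g => O [x Ox] oO.
have : nbhs x O by rewrite openE in oO; exact: oO Ox.
move/nbhs_normP => [e /= e0 He].
have e'0 : (0 : CC R) < ((complex.Re e / n.+1%:R)%:C)%C.
  by rewrite ltcR divr_gt0 ?ltr0n ?Re_gt0.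
have approx k : exists j, `|x k - f j| < ((complex.Re e / n.+1%:R)%:C)%C.
  exact: dense_range_approx.
have [h hh] := fin_all_exists approx.
pose j := CodeSeq.code [seq h k | k <- enum 'I_n].
exists (g j); split; last by exists j.
apply: He; rewrite /= normr_lt_rnorm //; apply: rnorm_hpow_lt => [|k]; first exact: Re_gt0.
rewrite !ffunE CodeSeq.codeK (nth_map k) ?size_enum_ord // nth_ord_enum.
by have := hh k; rewrite normr_lt_rnorm.
Qed.

Definition hilbert_pow : hilbert R :=
  @Hilbert R (NormedModule.clone (CC R) P _) hpow_inner hpow_innerlD
    hpow_innerC hpow_norm_inner hpow_complete hpow_separable.

End HilbertPowerSpace.

Section LinearMap.
Variables (R : realType) (X Y : hilbert R) (T : X -> Y).
Hypothesis linT : forall (a : CC R) (x y : X), T (a *: x + y) = a *: T x + T y.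

Lemma lin0 : T 0 = 0.
Proof.
have := linT 1 0 0; rewrite !scale1r addr0 => T00.
by apply: (addrI (T 0)); rewrite addr0 -T00.
Qed.

Lemma linD x y : T (x + y) = T x + T y.
Proof. by have := linT 1 x y; rewrite !scale1r. Qed.

Lemma linZ a x : T (a *: x) = a *: T x.
Proof. by have := linT a x 0; rewrite !addr0 lin0 addr0. Qed.

Lemma linB x y : T (x - y) = T x - T y.
Proof. by rewrite linD -scaleN1r linZ scaleN1r. Qed.

Lemma lin_sum (I : Type) (s : seq I) (P : pred I) (F : I -> X) :
  T (\sum_(i <- s | P i) F i) = \sum_(i <- s | P i) T (F i).
Proof.
elim: s => [|a s IH]; first by rewrite !big_nil lin0.
by rewrite !big_cons; case: (P a); rewrite ?linD IH.
Qed.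

Lemma is_bop_of_bound (M : R) : (forall x, rnorm (T x) <= M * rnorm x) -> is_bop T.
Proof.
move=> TM; split => // x; apply/cvgrPdist_lt => e e0.
have M1 : 0 < `|M| + 1 by rewrite ltr_pwDr // normr_ge0.
have d0 : (0 : CC R) < ((complex.Re e / (`|M| + 1))%:C)%C.
  by rewrite ltcR divr_gt0 ?Re_gt0.
apply/nbhs_normP; exists ((complex.Re e / (`|M| + 1))%:C)%C => //= t.
rewrite /ball_ /= (normr_lt_rnorm _ d0) (normr_lt_rnorm _ e0) /= -linB => xt.
apply: le_lt_trans (TM _) _.
apply: (@le_lt_trans _ _ (`|M| * rnorm (x - t))).
  by apply: ler_wpM2r; [exact: rnorm_ge0 | exact: ler_norm].
rewrite ltr_pdivlMr // in xt.
have := rnorm_ge0 (x - t); have := normr_ge0 M; nra.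
Qed.

End LinearMap.

Lemma is_bop_bounded (R : realType) (X Y : hilbert R) (T : X -> Y) : is_bop T ->
  exists M : R, 0 < M /\ forall x, rnorm (T x) <= M * rnorm x.
Proof.
move=> [linT contT].
have : T @ (0 : X) --> (0 : Y) by rewrite -(lin0 linT); exact: contT.
move/cvgr0Pnorm_lt => /(_ 1 ltr01) /nbhs_norm0P [e /= e0 Te].
have eR := Re_gt0 e0.
exists (2 / complex.Re e); split; first by rewrite divr_gt0.
move=> x; have [->|x0] := eqVneq x 0; first by rewrite (lin0 linT) !rnorm0 mulr0.
have rx : 0 < rnorm x.
  by rewrite lt_def rnorm_ge0 andbT; apply: contra_neq x0; apply: rnorm_eq0.
(* rescale x into the ball of radius e where T is bounded by 1 *)
pose c : R := complex.Re e / (2 * rnorm x).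
have c0 : 0 < c by rewrite divr_gt0 // mulr_gt0.
have : rnorm (T ((c%:C)%C *: x)) < 1.
  rewrite -ltcR -normr_rnorm; apply: Te.
  rewrite /= (normr_lt_rnorm _ e0) rnormZr ?(ltW c0) // /c.
  have -> : complex.Re e / (2 * rnorm x) * rnorm x = complex.Re e / 2.
    by field; rewrite gt_eqF.
  lra.
rewrite (linZ linT) rnormZr ?(ltW c0) // => cTx.
have -> : rnorm (T x) = (c * rnorm (T x)) * (2 / complex.Re e * rnorm x).
  by rewrite /c; field; rewrite !gt_eqF.
apply: ler_piMl; last exact: ltW.
by rewrite mulr_ge0 ?rnorm_ge0 // ltW // divr_gt0.
Qed.

Section BoundedOperators.
Variable R : realType.
Implicit Types X Y Z : hilbert R.

Lemma is_bop0 X Y : is_bop (fun _ : X => (0 : Y)).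
Proof.
apply: (@is_bop_of_bound _ _ _ _ _ 0) => [a x y|x]; first by rewrite scaler0 addr0.
by rewrite rnorm0 mul0r.
Qed.

Lemma is_bop_id X : is_bop (fun x : X => x).
Proof. by apply: (@is_bop_of_bound _ _ _ _ _ 1) => // x; rewrite mul1r. Qed.

Lemma is_bop_comp X Y Z (S : Y -> Z) (T : X -> Y) :
  is_bop S -> is_bop T -> is_bop (fun x => S (T x)).
Proof.
move=> bS bT; have [MS [MS0 SM]] := is_bop_bounded bS.
have [MT [MT0 TM]] := is_bop_bounded bT.
apply: (@is_bop_of_bound _ _ _ _ _ (MS * MT)) => [a x y|x] /=.
  by rewrite bT.1 bS.1.
by apply: le_trans (SM _) _; rewrite -mulrA ler_wpM2l ?TM // ltW.
Qed.

Lemma is_bop_scale X Y (a : CC R) (T : X -> Y) :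
  is_bop T -> is_bop (fun x => a *: T x).
Proof.
move=> bT; have [MT [MT0 TM]] := is_bop_bounded bT.
apply: (@is_bop_of_bound _ _ _ _ _ (complex.Re `|a| * MT)) => [b x y|x] /=.
  by rewrite bT.1 scalerDr !scalerA mulrC.
by rewrite rnormZ -mulrA ler_wpM2l // -ler0c RRe_real.
Qed.

Lemma is_bop_sum X Y (I : finType) (P : pred I) (T : I -> X -> Y) :
  (forall i, is_bop (T i)) -> is_bop (fun x => \sum_(i | P i) T i x).
Proof.
move=> bT; have /fin_all_exists [M TM] := fun i => is_bop_bounded (bT i).
apply: (@is_bop_of_bound _ _ _ _ _ (\sum_i M i)) => [a x y|x] /=.
  by rewrite scaler_sumr -big_split /=; apply: eq_bigr => i _; rewrite (bT i).1.
apply: le_trans (rnorm_sum _ _ _) _.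
rewrite mulr_suml big_mkcond /=; apply: ler_sum => i _.
case: (P i); first exact: (TM i).2.
by rewrite mulr_ge0 ?rnorm_ge0 // ltW // (TM i).1.
Qed.

Lemma is_bop_zop (N : nat) X Y (z : 'rV[CC R]_N) (T : 'I_N -> X -> Y) :
  (forall k, is_bop (T k)) -> is_bop (zop z T).
Proof. by move=> bT; apply: is_bop_sum => k; apply: is_bop_scale. Qed.

Lemma is_bop_iter X (T : X -> X) n : is_bop T -> is_bop (iter n T).
Proof.
move=> bT; elim: n => [|n IH]; first exact: is_bop_id.
exact: is_bop_comp bT IH.
Qed.

End BoundedOperators.

Section Factorization.
Variables (R : realType) (N : nat) (U : hilbert R).

Definition hpow_coord (Y : hilbert R) (k : 'I_N) (x : hilbert_pow Y N) : Y :=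
  (x : hpow Y N) k.

Definition hpow_unit (Y : hilbert R) (k : 'I_N) (y : Y) : hilbert_pow Y N :=
  [ffun j : 'I_N => if j == k then y else 0] : hpow Y N.

Lemma is_bop_hpow_coord (Y : hilbert R) k : is_bop (@hpow_coord Y k).
Proof.
apply: (@is_bop_of_bound _ _ _ _ _ 1) => [a x y|x]; first by rewrite /hpow_coord !ffunE.
by rewrite mul1r; exact: rnorm_coord_le.
Qed.

Lemma is_bop_hpow_unit (Y : hilbert R) k : is_bop (@hpow_unit Y k).
Proof.
apply: (@is_bop_of_bound _ _ _ _ _ 1) => [a x y|x].
  by apply/ffunP => j; rewrite !ffunE; case: (j == k); rewrite ?scaler0 ?addr0.
rewrite mul1r; apply: le_trans (rnorm_hpow_le_sum _) _.
rewrite (bigD1 k) //= big1 ?addr0 ?ffunE ?eqxx // => j /negPf jk.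
by rewrite ffunE jk rnorm0.
Qed.

Lemma factorization_word_sum m : forall (Y : hilbert R) (I : finType)
    (w : I -> 'I_m.+1 -> 'I_N) (d : I -> U -> Y), (forall i, is_bop (d i)) ->
  exists F, @factorization R N U Y m.+1 F /\
    forall z u, F z u = \sum_i (\prod_j z ord0 (w i j)) *: d i u.
Proof.
elim: m => [|m IH] Y I w d bd.
  pose L k u := \sum_(i | w i ord0 == k) d i u.
  exists (fun z => zop z L); split; first by apply: Defs.fact1 => k; exact: is_bop_sum.
  move=> z u; rewrite /zop /L.
  under eq_bigr => k _ do rewrite scaler_sumr big_mkcond /=.
  rewrite exchange_big /=; apply: eq_bigr => i _.
  by rewrite big_ord1 -big_mkcond /= (eq_bigl (fun k => k == w i ord0)) ?big_pred1_eq.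
pose d' i u := hpow_unit (w i ord0) (d i u).
have bd' i : is_bop (d' i) by exact: is_bop_comp (is_bop_hpow_unit _ _) (bd i).
have [F' [fF' F'E]] := IH (hilbert_pow Y N) I (fun i j => w i (lift ord0 j)) d' bd'.
exists (fun z u => zop z (@hpow_coord Y) (F' z u)); split.
  by apply: Defs.factS fF' => k; exact: is_bop_hpow_coord.
move=> z u.
have F'_coord k : (F' z u : hpow Y N) k = \sum_i
    (\prod_j z ord0 (w i (lift ord0 j))) *: (if k == w i ord0 then d i u else 0).
  by rewrite F'E sum_ffunE; apply: eq_bigr => i _; rewrite !ffunE.
rewrite /zop /hpow_coord.
under eq_bigr => k _ do rewrite F'_coord scaler_sumr.
rewrite exchange_big /=; apply: eq_bigr => i _.
rewrite (bigD1 (w i ord0)) //= eqxx [X in _ + X]big1 => [|k /negPf ->]; last first.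
  by rewrite !scaler0.
by rewrite addr0 scalerA [X in _ = X *: _]big_ord_recl.
Qed.

Section MultiIndexWord.
Variables (m : nat) (k0 : 'I_N).

Definition mindex_word (a : {ffun 'I_N -> 'I_m.+1}) : seq 'I_N :=
  [seq x | k <- enum 'I_N, x <- nseq (a k) k].

Lemma prod_mindex_word (a : {ffun 'I_N -> 'I_m.+1}) (z : 'rV[CC R]_N) :
  (\sum_k (a k : nat))%N = m ->
  \prod_(j < m) z ord0 (nth k0 (mindex_word a) j) = \prod_k z ord0 k ^+ a k.
Proof.
move=> sum_a.
have size_w : size (mindex_word a) = m.
  rewrite -[RHS]sum_a size_allpairs_dep sumnE big_map big_enum /=.
  by apply: eq_bigr => k _; rewrite size_nseq.
transitivity (\prod_(k <- mindex_word a) z ord0 k).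
  by rewrite (big_nth k0) size_w big_mkord.
rewrite big_allpairs_dep big_enum /=; apply: eq_bigr => k _.
by rewrite big_nseq; elim: (nat_of_ord (a k)) => //= n ->; rewrite exprS.
Qed.

End MultiIndexWord.

Lemma hpoly_factorization m (Y : hilbert R) (c : {ffun 'I_N -> 'I_m.+1} -> U -> Y) :
  (0 < N)%N -> (1 <= m)%N -> (forall a, is_bop (c a)) ->
  exists F : 'rV[CC R]_N -> U -> Y,
    @factorization R N U Y m F /\ forall z u, F z u = hpoly c z u.
Proof.
case: m c => [//|m] c N_gt0 _ bc.
pose k0 : 'I_N := Ordinal N_gt0.
pose d (a : {ffun 'I_N -> 'I_m.+2}) :=
  if (\sum_k (a k : nat) == m.+1)%N then c a else (fun _ => 0).
have bd a : is_bop (d a) by rewrite /d; case: ifP => _; [exact: bc | exact: is_bop0].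
have [F [fF FE]] := factorization_word_sum (fun a (j : 'I_m.+1) => nth k0 (mindex_word a) j) bd.
exists F; split => // z u; rewrite FE /hpoly [RHS]big_mkcond /=.
apply: eq_bigr => a _; rewrite /d; case: eqP => [sum_a|_]; last by rewrite scaler0.
by rewrite prod_mindex_word.
Qed.

Lemma hpoly_neq0_dim_gt0 m (Y : hilbert R) (c : {ffun 'I_N -> 'I_m.+1} -> U -> Y) z u :
  (1 <= m)%N -> hpoly c z u != 0 -> (0 < N)%N.
Proof.
case: N c z => [|//] c z m_gt0; rewrite /hpoly big_pred0 ?eqxx // => a.
by rewrite big_ord0 eq_sym; apply/negbTE; rewrite -lt0n.
Qed.

End Factorization.

Section Homogeneity.
Variable R : realType.

Lemma zopZ (N : nat) (X Y : hilbert R) (t : CC R) (z : 'rV[CC R]_N)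
    (T : 'I_N -> X -> Y) x :
  zop (t *: z) T x = t *: zop z T x.
Proof. by rewrite /zop scaler_sumr; apply: eq_bigr => k _; rewrite mxE scalerA. Qed.

Lemma hpolyZ (N m : nat) (U Y : hilbert R) (c : {ffun 'I_N -> 'I_m.+1} -> U -> Y)
    (t : CC R) z u :
  hpoly c (t *: z) u = t ^+ m *: hpoly c z u.
Proof.
rewrite /hpoly scaler_sumr; apply: eq_bigr => a /eqP sum_a.
rewrite scalerA; congr (_ *: _).
under eq_bigr => k _ do rewrite mxE exprMn.
by rewrite big_split /= prodrXr sum_a.
Qed.

End Homogeneity.

Section SmallPolynomials.
Variables (R : realType) (V : normedModType (CC R)).

Lemma eq0_of_rnorm_le_small (v : V) (C d : R) : 0 < d -> 0 <= C ->
  (forall r, 0 < r -> r < d -> rnorm v <= r * C) -> v = 0.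
Proof.
move=> d0 C0 vC; apply: rnorm_eq0; apply/eqP; rewrite eq_le rnorm_ge0 andbT.
rewrite leNgt; apply/negP => v0.
have dC : 0 <= d * C by rewrite mulr_ge0 // ltW.
(* r := d |v| / (2 (|v| + d C)) is below d, and r C < |v| *)
pose r := d * rnorm v / (2 * (rnorm v + d * C)).
have r0 : 0 < r by rewrite /r divr_gt0 ?mulr_gt0 // ltr_wpDr.
have rd : r < d by rewrite /r ltr_pdivrMr ?mulr_gt0 ?ltr_wpDr //; nra.
have := vC r r0 rd; rewrite /r mulrAC ler_pdivlMr ?mulr_gt0 ?ltr_wpDr //; nra.
Qed.

Lemma coef_eq0_of_poly_bigO p (v : nat -> V) (K d : R) : 0 < d ->
  (forall r : R, 0 < r -> r < d ->
     rnorm (\sum_(j < p) (r%:C)%C ^+ j *: v j) <= K * r ^+ p) ->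
  forall j, (j < p)%N -> v j = 0.
Proof.
elim: p v => [//|p IH] v d0 vK.
pose tail (r : R) := \sum_(j < p) (r%:C)%C ^+ j *: v j.+1.
have split_poly (r : R) :
    \sum_(j < p.+1) (r%:C)%C ^+ j *: v j = v 0%N + (r%:C)%C *: tail r.
  rewrite big_ord_recl expr0 scale1r /tail scaler_sumr; congr (_ + _).
  by apply: eq_bigr => i _; rewrite lift0 scalerA exprS.
(* for r < 1: |v 0| <= |poly r| + r |tail r| <= r (|K| + sum_j |v j.+1|) *)
have v00 : v 0%N = 0.
  apply: (@eq0_of_rnorm_le_small _ (`|K| + \sum_(j < p) rnorm (v j.+1)) (Num.min d 1)).
  - by rewrite lt_min d0 ltr01.
  - by rewrite addr_ge0 // sumr_ge0 // => i _; exact: rnorm_ge0.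
  move=> r r0; rewrite lt_min => /andP[rd r1].
  have r_ge0 := ltW r0; have r_le1 := ltW r1.
  rewrite -[v 0%N](addrK ((r%:C)%C *: tail r)) -split_poly.
  apply: le_trans (rnormD _ _) _; rewrite rnormN rnormZr // mulrDr.
  apply: lerD.
    apply: le_trans (vK r r0 rd) _; rewrite exprS mulrCA ler_wpM2l //.
    apply: le_trans (ler_norm _) _; rewrite normrM (ger0_norm (exprn_ge0 _ r_ge0)).
    by rewrite ler_piMr ?normr_ge0 ?exprn_ile1.
  rewrite ler_wpM2l //; apply: le_trans (rnorm_sum _ _ _) _; apply: ler_sum => i _.
  rewrite -rmorphXn rnormZr ?exprn_ge0 // ler_piMl ?rnorm_ge0 ?exprn_ile1 //.
case=> [_|j]; first exact: v00.
rewrite ltnS; apply: (IH (fun j => v j.+1)) => // r r0 rd.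
have := vK r r0 rd; rewrite split_poly v00 add0r rnormZr ?(ltW r0) // exprS mulrCA.
by rewrite ler_pM2l.
Qed.

End SmallPolynomials.

Section Defect.
Variables (R : realType) (X Y : hilbert R) (T : X -> X) (Cz : X -> Y).
Variables (b : X) (d th : Y) (m : nat).

(* Coefficients of r^j in  r d + sum_n r^(n+2) Cz (T^n b) - r^(m+2) th. *)
Definition defect_coef (j : nat) : Y :=
  match j with
  | 0 => 0
  | 1 => d
  | n.+2 => Cz (iter n T b) - (if n == m then th else 0)
  end.

Hypotheses (bT : is_bop T) (bCz : is_bop Cz).

Lemma neumann_expansion (t : CC R) (x : X) : x = t *: b + t *: T x ->
  forall n, x = \sum_(k < n) t ^+ k.+1 *: iter k T b + t ^+ n *: iter n T x.
Proof.
move=> xE; elim => [|n IH]; first by rewrite big_ord0 add0r expr0 scale1r.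
have lTn := (is_bop_iter n bT).1.
rewrite big_ord_recr /= -addrA {1}IH; congr (_ + _).
by rewrite {1}xE (linD lTn) !(linZ lTn) -iterSr scalerDr !scalerA -!exprSr.
Qed.

Lemma defect_poly (t : CC R) (x : X) :
  x = t *: b + t *: T x -> t ^+ m.+2 *: th = t *: d + t *: Cz x ->
  \sum_(j < m.+3) t ^+ j *: defect_coef j = - (t ^+ m.+2 *: Cz (iter m.+1 T x)).
Proof.
move=> xE thE; have lC := bCz.1.
have CxE : t *: Cz x = \sum_(n < m.+1) t ^+ n.+2 *: Cz (iter n T b)
                       + t ^+ m.+2 *: Cz (iter m.+1 T x).
  rewrite {1}(neumann_expansion xE m.+1) (linD lC) (lin_sum lC) (linZ lC).
  rewrite scalerDr scaler_sumr scalerA -exprS; congr (_ + _).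
  by apply: eq_bigr => n _; rewrite (linZ lC) scalerA -exprS.
have th_part : \sum_(n < m.+1) t ^+ n.+2 *: (if n == m :> nat then th else 0) =
               t ^+ m.+2 *: th.
  by rewrite big_ord_recr /= eqxx big1 ?add0r // => n _; rewrite ltn_eqF ?scaler0.
rewrite big_ord_recl big_ord_recl /= scaler0 add0r expr1.
under eq_bigr => n _ do rewrite /bump !leq0n !add1n ?add0n scalerBr.
by rewrite sumrB th_part thE CxE opprD addrCA addNKr opprD addNKr.
Qed.

End Defect.

Section Realization.
Variables (R : realType) (N : nat) (X U Y : hilbert R).
Variables (A : 'I_N -> X -> X) (B : 'I_N -> U -> X).
Variables (C : 'I_N -> X -> Y) (D : 'I_N -> U -> Y).
Hypothesis bA : forall k, is_bop (A k).

Lemma transfer_solution_near0 (theta : 'rV[CC R]_N -> U -> Y) z u :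
  transfer_eq_near0 A B C D theta ->
  exists2 d : R, 0 < d & forall r : R, 0 < r -> r < d -> exists x : X,
    [/\ x = (r%:C)%C *: zop z B u + (r%:C)%C *: zop z A x,
        rnorm x <= 2 * r * rnorm (zop z B u) &
        theta ((r%:C)%C *: z) u = (r%:C)%C *: zop z D u + (r%:C)%C *: zop z C x].
Proof.
move/nbhs_norm0P => [e /= e0 near_e].
have [M [M0 AM]] := is_bop_bounded (is_bop_zop z bA).
have eR := Re_gt0 e0.
(* r |z| < e puts r z in the neighbourhood; r M <= 1/2 bounds the state x *)
exists (Num.min (complex.Re e / (rnorm z + 1)) (1 / (2 * M))).
  by rewrite lt_min !divr_gt0 ?mulr_gt0 // ltr_wpDl ?rnorm_ge0.
move=> r r0; rewrite lt_min => /andP[].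
rewrite ltr_pdivlMr ?ltr_wpDl ?rnorm_ge0 // => rz.
rewrite ltr_pdivlMr ?mulr_gt0 // => rM.
have : `|(r%:C)%C *: z| < e.
  by rewrite normr_lt_rnorm // rnormZr ?(ltW r0) //; have := rnorm_ge0 z; nra.
move=> /near_e [[g _ gK] sol].
pose x := g (zop ((r%:C)%C *: z) B u).
have xE : x - zop ((r%:C)%C *: z) A x = zop ((r%:C)%C *: z) B u := gK _.
have thE := sol u x xE.
rewrite !zopZ in xE thE.
have x_fix : x = (r%:C)%C *: zop z B u + (r%:C)%C *: zop z A x by rewrite -xE subrK.
exists x; split => //.
have := rnormD ((r%:C)%C *: zop z B u) ((r%:C)%C *: zop z A x).
rewrite -x_fix !rnormZr ?(ltW r0) //.
have := AM x; have := rnorm_ge0 x; have := rnorm_ge0 (zop z B u); nra.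
Qed.

Lemma hpoly_realization m (c : {ffun 'I_N -> 'I_m.+1} -> U -> Y) :
  (1 < m)%N -> (forall k, is_bop (C k)) ->
  transfer_eq_near0 A B C D (hpoly c) ->
  forall z u, hpoly c z u = zop z C (iter (m - 2) (zop z A) (zop z B u)).
Proof.
case: m c => [|[|m]] // c _ bC transfer z u; rewrite !subSS subn0.
set T := zop z A; set b := zop z B u; set Cz := zop z C; set th := hpoly c z u.
have bT : is_bop T := is_bop_zop z bA.
have bCz : is_bop Cz := is_bop_zop z bC.
have [M [M0 KM]] := is_bop_bounded (is_bop_comp bCz (is_bop_iter m.+1 bT)).
have [d d0 sol] := transfer_solution_near0 z u transfer.
apply/eqP; rewrite eq_sym -subr_eq0; apply/eqP.
pose v := defect_coef T Cz b (zop z D u) th m.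
have /= := @coef_eq0_of_poly_bigO _ _ m.+3 v (2 * M * rnorm b) d d0 _ m.+2 (ltnSn _).
rewrite eqxx; apply => r r0 rd.
have [x [xE xb thE]] := sol r r0 rd.
rewrite hpolyZ in thE.
have r_ge0 := ltW r0; have rm_ge0 := exprn_ge0 m.+2 r_ge0.
rewrite (defect_poly bT bCz xE thE) rnormN -rmorphXn rnormZr //.
apply: le_trans (ler_wpM2l rm_ge0 (KM x)) _.
apply: le_trans (ler_wpM2l rm_ge0 (ler_wpM2l (ltW M0) xb)) _.
by rewrite [r ^+ m.+3]exprS le_eqVlt; apply/orP; left; apply/eqP; ring.
Qed.

End Realization.

Theorem mainTheorem2 (R : realType) (N m : nat) (U Y : hilbert R)
  (c : {ffun 'I_N -> 'I_m.+1} -> U -> Y) :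
  (1 <= m)%N ->
  (forall a, is_bop (c a)) ->
  (exists (z : 'rV[CC R]_N) (u : U), hpoly c z u != 0) ->
  (exists F : 'rV[CC R]_N -> U -> Y,
      @factorization R N U Y m F /\ forall z u, F z u = hpoly c z u) /\
  ((1 < m)%N ->
   forall (X : hilbert R) (A : 'I_N -> X -> X) (B : 'I_N -> U -> X)
          (C : 'I_N -> X -> Y) (D : 'I_N -> U -> Y),
     (forall k, is_bop (A k)) -> (forall k, is_bop (B k)) ->
     (forall k, is_bop (C k)) -> (forall k, is_bop (D k)) ->
     transfer_eq_near0 A B C D (hpoly c) ->
     forall z u, hpoly c z u = zop z C (iter (m - 2) (zop z A) (zop z B u))).
Proof.
move=> m_ge1 bc [z [u th_z]]; split.
  exact: hpoly_factorization (hpoly_neq0_dim_gt0 m_ge1 th_z) m_ge1 bc.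
move=> m_gt1 X A B C D bA _ bC _.
exact: hpoly_realization.
Qed.
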